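(* Let $D$ be a strict, asymmetric digraph of order $n$. Then the number $c(L(D))$ of connected components of $L(D)$ satisfies $c(L(D))\le f(n)$, where $f(n)=\frac{n^2-1}{4}$ if $n$ is odd and $f(n)=\frac{n^2}{4}$ if $n$ is even. Moreover, equality holds if and only if either $D$ is the transitive tournament of order $3$, or there is a partition $V(D)=X\cup Y$ with $\big||X|-|Y|\big|\le 1$ such that $A(D)=\{(x,y): x\in X,\ y\in Y\}$ (i.e. $D$ is the orientation of the balanced complete bipartite graph on $X,Y$ with all arcs directed from $X$ to $Y$).
   Context: A digraph is strict if it has no loops and no parallel arcs, and asymmetric if $(u,v)\in A(D)$ implies $(v,u)\notin A(D)$. For a digraph $D$, the line graph $L(D)$ is the graph with vertex set $A(D)$ in which two distinct arcs are adjacent if and only if the head of one is the tail of the other. A tournament is an orientation of a complete graph; it is transitive if it has no directed cycle. *)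

From mathcomp Require Import all_boot.
Set Implicit Arguments. Unset Strict Implicit. Unset Printing Implicit Defensive.

(* A digraph on a finite vertex type T is an arc relation D : rel T
   ((u,v) is an arc iff D u v); parallel arcs are impossible by construction. *)
Definition strict_digraph (T : finType) (D : rel T) : Prop := forall x, ~~ D x x.
Definition asymmetric (T : finType) (D : rel T) : Prop :=
  forall u v, D u v -> ~~ D v u.

Definition arc (T : finType) (D : rel T) : finType := {a : T * T | D a.1 a.2}.
Arguments arc {T} D.

Definition line_adj (T : finType) (D : rel T) : rel (arc D) :=
  fun a b => (a != b) && (((val a).2 == (val b).1) || ((val b).2 == (val a).1)).
Arguments line_adj {T} D.

Definition num_components (T : finType) (D : rel T) : nat :=
  n_comp (line_adj D) predT.

Definition f (n : nat) : nat := if odd n then (n ^ 2 - 1) %/ 4 else n ^ 2 %/ 4.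

Definition tournament (T : finType) (D : rel T) : Prop :=
  forall x y, x != y -> D x y || D y x.
Definition acyclic (T : finType) (D : rel T) : Prop :=
  forall x y, D x y -> ~~ connect D y x.
Definition transitive_tournament_of_order3 (T : finType) (D : rel T) : Prop :=
  [/\ #|T| = 3, strict_digraph D, tournament D & acyclic D].

Definition balanced_bipartite_X_to_Y (T : finType) (D : rel T) : Prop :=
  exists X : {set T},
    [/\ #|X| <= #|~: X| + 1, #|~: X| <= #|X| + 1 &
        forall x y, D x y = (x \in X) && (y \in ~: X)].

From Pilot Require Import Defs.
From mathcomp Require Import all_boot.
From mathcomp Require Import zify.

(* Choose one arc in each component of L(D), namely its root.  Two representatives r1, r2
   never satisfy head r1 = tail r2: for r1 <> r2 they would be adjacent, and for r1 = r2
   the arc would be a loop.  So the sets X of tails and Y of heads of representatives are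
   disjoint, and r |-> (tail r, head r) injects the components into X * Y, whence
   c(L(D)) <= |X| |Y| <= f(n).  In the equality case X and ~X = Y are balanced halves of
   V(D) and every (x, y) in X * Y is a representative.  An arc u -> v inside X is then
   adjacent to all the representatives (v, y), which forces |Y| = 1, |X| = 2 and D is the
   transitive triangle; symmetrically for an arc inside Y.  Arcs from Y to X contradict
   asymmetry, so otherwise D is exactly the complete orientation from X to Y. *)

Set Implicit Arguments.
Unset Strict Implicit.
Unset Printing Implicit Defensive.

Lemma f_half_uphalf n : f n = n./2 * uphalf n.
Proof.
rewrite /f uphalf_half; have := odd_double_half n.
case: (odd n) => /= <-; rewrite -mul2n -mulnn.
- by rewrite (_ : _ - 1 = n./2 * (1 + n./2) * 4) ?mulnK //; nia.
- by rewrite (_ : _ * _ = n./2 * n./2 * 4) ?mulnK //; nia.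
Qed.

Lemma four_mul_add_sqr_diff a b :
  4 * (a * b) + (a - b) * (a - b) + (b - a) * (b - a) = (a + b) * (a + b).
Proof. nia. Qed.

Lemma mul_le_f a b n : a + b <= n -> a * b <= f n.
Proof.
rewrite f_half_uphalf uphalf_half => le_ab_n.
have := odd_double_half n; have := four_mul_add_sqr_diff a b.
have : (a + b) * (a + b) <= n * n by apply: leq_mul.
by case: (odd n) => /=; nia.
Qed.

Lemma mul_eq_f a b n : a + b = n -> a <= b + 1 -> b <= a + 1 -> a * b = f n.
Proof.
rewrite f_half_uphalf uphalf_half; have := odd_double_half n.
by case: (odd n) => /=; nia.
Qed.

(* For n = 1, a = b = 0 violates the conclusion. *)
Lemma f_le_mul a b n : 2 <= n -> a + b <= n -> f n <= a * b ->
  [/\ a + b = n, a <= b + 1 & b <= a + 1].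
Proof.
rewrite f_half_uphalf uphalf_half => n_ge2 le_ab_n le_f_ab.
have := odd_double_half n; have := four_mul_add_sqr_diff a b => sqr_ab n_half.
have eq_ab_n : a + b = n.
  apply/eqP; rewrite eqn_leq le_ab_n leqNgt; apply/negP => lt_ab_n.
  have : (a + b) * (a + b) <= (n - 1) * (n - 1) by apply: leq_mul; lia.
  by case: (odd n) n_half => /=; nia.
by split=> //; case: (odd n) n_half => /=; nia.
Qed.

Lemma connect_rank_le (T : finType) (e : rel T) (r : T -> nat) :
  (forall x y, e x y -> r x < r y) -> forall x y, connect e x y -> r x <= r y.
Proof.
move=> r_lt x y /connectP [s path_s ->]; elim: s x path_s => //= z s IHs x.
by case/andP=> /r_lt/ltnW le_rxz /IHs; apply: leq_trans.
Qed.

Lemma acyclic_source (T : finType) (D : rel T) (x0 : T) :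
  acyclic D -> exists p, forall z, ~~ D z p.
Proof.
move=> acyclicD; pose ancestors x := [set y | connect D y x].
have [p _ min_p] := @arg_minnP _ x0 predT (fun x => #|ancestors x|) isT.
exists p => z; apply/negP => Dzp; have := min_p z isT; apply/negP; rewrite -ltnNge.
apply/proper_card/properP; split.
  by apply/subsetP => y; rewrite !inE => /connect_trans; apply; apply: connect1.
by exists p; rewrite !inE ?connect0 ?(negbTE (acyclicD _ _ Dzp)).
Qed.

Lemma arc_neq (T : finType) (D : rel T) x y : strict_digraph D -> D x y -> x != y.
Proof. by move=> strictD; apply: contraTneq => ->; apply: strictD. Qed.

Lemma arc_inside_dec (T : finType) (D : rel T) (A : {set T}) :
  (exists u v, [/\ D u v, u \in A & v \in A]) \/ {in A &, forall x y, D x y = false}.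
Proof.
have [/existsP [u /existsP [v /and3P arc_uv]]|no_arc] :=
  boolP [exists u, exists v, [&& D u v, u \in A & v \in A]]; first by left; exists u, v.
right=> x y xA yA; apply/negP => Dxy; case/negP: no_arc.
by apply/existsP; exists x; apply/existsP; exists y; rewrite Dxy xA yA.
Qed.

Section LineGraph.

Variables (T : finType) (D : rel T).
Local Notation E := (line_adj D).

Lemma line_adj_sym : symmetric E.
Proof. by move=> a b; rewrite /line_adj eq_sym orbC. Qed.

Let connect_symE : connect_sym E := sym_connect_sym line_adj_sym.

Definition comp_roots : {set Defs.arc D} := [set r | roots E r].

Lemma num_components_roots : num_components D = #|comp_roots|.
Proof. by apply: eq_card => r; rewrite !inE andbT. Qed.

Lemma comp_roots_connect r1 r2 :
  r1 \in comp_roots -> r2 \in comp_roots -> connect E r1 r2 -> r1 = r2.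
Proof.
rewrite !inE => /eqP root_r1 /eqP root_r2.
by rewrite -(root_connect connect_symE) root_r1 root_r2 => /eqP.
Qed.

Lemma comp_roots_common_neighbour e r1 r2 :
  r1 \in comp_roots -> r2 \in comp_roots -> E e r1 -> E e r2 -> r1 = r2.
Proof.
move=> root_r1 root_r2 e_r1 e_r2; apply: comp_roots_connect => //.
by apply: (connect_trans (connect1 _) (connect1 e_r2)); rewrite line_adj_sym.
Qed.

Lemma isolated_arc_connect a b : (forall c, ~~ E a c) -> connect E a b -> b = a.
Proof.
move=> isolated_a /connectP [[|c s] /= path_s ->] //.
by move: path_s; rewrite (negbTE (isolated_a c)).
Qed.

Lemma isolated_arc_root a : (forall c, ~~ E a c) -> a \in comp_roots.
Proof.
by move=> isolated_a; rewrite inE; apply/eqP/(isolated_arc_connect isolated_a)/connect_root.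
Qed.

Lemma num_components_no_line_adj : (forall a b, ~~ E a b) -> num_components D = #|Defs.arc D|.
Proof.
move=> no_adj; rewrite num_components_roots; apply: eq_card => a.
by rewrite isolated_arc_root.
Qed.

Lemma num_components_ge2_isolated a b :
  (forall c, ~~ E a c) -> b != a -> 1 < num_components D.
Proof.
move=> isolated_a neq_ba; rewrite num_components_roots.
have neq_root_b : root E b != a.
  apply: contra neq_ba => /eqP root_b; apply/eqP/(isolated_arc_connect isolated_a).
  by rewrite connect_symE -root_b connect_root.
have <- : #|[set a; root E b]| = 2 by rewrite cards2 eq_sym neq_root_b.
apply/subset_leq_card/subsetP => c /set2P [] ->; first exact: isolated_arc_root.
by rewrite inE roots_root.
Qed.

Definition root_tails : {set T} := [set (val r).1 | r in comp_roots].
Definition root_heads : {set T} := [set (val r).2 | r in comp_roots].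

Lemma comp_roots_sub_tails_heads : val @: comp_roots \subset setX root_tails root_heads.
Proof.
apply/subsetP => _ /imsetP [r root_r ->]; rewrite [val r]surjective_pairing in_setX.
by apply/andP; split; apply/imsetP; exists r.
Qed.

Lemma card_comp_roots_val : #|val @: comp_roots| = #|comp_roots|.
Proof. by rewrite card_imset //; apply: val_inj. Qed.

Lemma num_components_le_tails_heads :
  num_components D <= #|root_tails| * #|root_heads|.
Proof.
rewrite num_components_roots -card_comp_roots_val -cardsX.
exact: subset_leq_card comp_roots_sub_tails_heads.
Qed.

Hypothesis strictD : strict_digraph D.

Lemma comp_roots_head_tail r1 r2 :
  r1 \in comp_roots -> r2 \in comp_roots -> (val r1).2 != (val r2).1.
Proof.
move=> root_r1 root_r2; have [<-|neq_r12] := eqVneq r1 r2.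
  by apply/eqP => head_tail; have := valP r1; rewrite /= head_tail (negbTE (strictD _)).
apply/eqP => head_tail; have /(comp_roots_connect root_r1 root_r2) : connect E r1 r2.
  by apply: connect1; rewrite /line_adj neq_r12 head_tail eqxx.
by move/eqP; rewrite (negbTE neq_r12).
Qed.

Lemma comp_roots_from_head u v (Duv : D u v) r1 r2 :
  r1 \in comp_roots -> r2 \in comp_roots -> (val r1).1 = v -> (val r2).1 = v -> r1 = r2.
Proof.
pose e : Defs.arc D := exist _ (u, v) Duv.
have e_adj r : (val r).1 = v -> E e r.
  move=> tail_r; rewrite /line_adj /= tail_r eqxx andbT.
  apply/eqP => /(congr1 (fun a => (val a).1)) /= u_eq.
  by have := strictD v; rewrite -{1}tail_r -u_eq Duv.
by move=> root_r1 root_r2 /e_adj e_r1 /e_adj; apply: comp_roots_common_neighbour.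
Qed.

Lemma comp_roots_to_tail u v (Duv : D u v) r1 r2 :
  r1 \in comp_roots -> r2 \in comp_roots -> (val r1).2 = u -> (val r2).2 = u -> r1 = r2.
Proof.
pose e : Defs.arc D := exist _ (u, v) Duv.
have e_adj r : (val r).2 = u -> E e r.
  move=> head_r; rewrite /line_adj /= head_r eqxx orbT andbT.
  apply/eqP => /(congr1 (fun a => (val a).2)) /= v_eq.
  by have := strictD u; rewrite -{2}head_r -v_eq Duv.
by move=> root_r1 root_r2 /e_adj e_r1 /e_adj; apply: comp_roots_common_neighbour.
Qed.

Lemma disjoint_root_tails_heads : [disjoint root_tails & root_heads].
Proof.
apply/pred0P => x /=; apply/andP => -[/imsetP [r1 root_r1 ->] /imsetP [r2 root_r2]].
by apply/eqP; rewrite eq_sym comp_roots_head_tail.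
Qed.

Lemma card_root_tails_heads :
  #|root_tails :|: root_heads| = #|root_tails| + #|root_heads|.
Proof. by rewrite cardsU (disjoint_setI0 disjoint_root_tails_heads) cards0 subn0. Qed.

Lemma card_root_tails_heads_le : #|root_tails| + #|root_heads| <= #|T|.
Proof. by rewrite -card_root_tails_heads max_card. Qed.

Lemma num_components_le_f : num_components D <= f #|T|.
Proof.
exact: leq_trans num_components_le_tails_heads (mul_le_f card_root_tails_heads_le).
Qed.

End LineGraph.

Definition transitive_triangle (T : finType) (D : rel T) (p q s : T) : Prop :=
  [/\ [set: T] = [set p; q; s], D p q, D p s & D q s].

Section TransitiveTriangle.

Variables (T : finType) (D : rel T) (p q s : T).
Hypotheses (strictD : strict_digraph D) (asymD : asymmetric D).
Hypothesis triangle : transitive_triangle D p q s.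

Let Dpq : D p q. Proof. by case: triangle. Qed.
Let Dps : D p s. Proof. by case: triangle. Qed.
Let Dqs : D q s. Proof. by case: triangle. Qed.

Lemma triangle_vertex w : [|| w == p, w == q | w == s].
Proof. by case: triangle => /setP /(_ w); rewrite !inE orbA. Qed.

Lemma triangle_source w : ~~ D w p.
Proof.
case/or3P: (triangle_vertex w) => /eqP ->; rewrite ?strictD //; exact: asymD.
Qed.

Lemma triangle_sink w : ~~ D s w.
Proof.
case/or3P: (triangle_vertex w) => /eqP ->; rewrite ?strictD //; exact: asymD.
Qed.

Lemma triangle_tournament : transitive_tournament_of_order3 D.
Proof.
have neq_pq := arc_neq strictD Dpq; have neq_ps := arc_neq strictD Dps.
have neq_qs := arc_neq strictD Dqs.
split=> //.
- case: triangle => setT_eq *; rewrite -cardsT setT_eq -setUA cardsU1 cards2 !inE.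
  by rewrite (negbTE neq_pq) (negbTE neq_ps) neq_qs.
- move=> x y; case/or3P: (triangle_vertex x) => /eqP ->;
  by case/or3P: (triangle_vertex y) => /eqP ->; rewrite ?eqxx ?Dpq ?Dps ?Dqs ?orbT.
(* rank p = 0, rank q = 1, rank s = 2 *)
pose rank w := (w != p) + (w == s).
have rank_lt x y : D x y -> rank x < rank y.
  move=> Dxy; have neq_yp : y != p by apply: contraTneq Dxy => ->; apply: triangle_source.
  case/or3P: (triangle_vertex x) => /eqP eq_x; move: Dxy; rewrite eq_x => Dxy.
  - by rewrite /rank eqxx (negbTE neq_ps) neq_yp.
  - have eq_ys : y = s.
      case/or3P: (triangle_vertex y) => /eqP // eq_y; move: Dxy; rewrite eq_y.
        by rewrite (negbTE (triangle_source _)).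
      by rewrite (negbTE (strictD _)).
    by rewrite /rank eq_ys eq_sym neq_pq (negbTE neq_qs) eq_sym neq_ps eqxx.
  - by move: Dxy; rewrite (negbTE (triangle_sink y)).
move=> x y /rank_lt lt_xy; apply/negP => /(connect_rank_le rank_lt).
by rewrite leqNgt lt_xy.
Qed.

Lemma triangle_num_components_ge2 : 1 < num_components D.
Proof.
pose e_ps : Defs.arc D := exist _ (p, s) Dps.
pose e_pq : Defs.arc D := exist _ (p, q) Dpq.
apply: (@num_components_ge2_isolated _ _ e_ps e_pq).
  case=> [[a b] /= Dab]; rewrite /line_adj negb_and /=; apply/orP; right.
  apply/norP; split; apply: contraTneq Dab.
    by move=> <-; apply: triangle_sink.
  by move=> ->; apply: triangle_source.
by apply: contra (arc_neq strictD Dqs) => /eqP [->].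
Qed.

End TransitiveTriangle.

Lemma transitive_tournament_triangle (T : finType) (D : rel T) :
  transitive_tournament_of_order3 D -> exists p q s, transitive_triangle D p q s.
Proof.
case=> card3 _ tourD acyclicD.
have [x0 _] : exists x0 : T, x0 \in [set: T] by apply/card_gt0P; rewrite cardsT card3.
have [p source_p] := acyclic_source x0 acyclicD.
have Dp w : w != p -> D p w.
  by move=> neq_wp; have := tourD _ _ neq_wp; rewrite (negbTE (source_p w)).
have /cards2P [q [s [neq_qs others]]] : #|[set~ p]| == 2 by rewrite cardsC1 card3.
have neq_qp : q != p by rewrite -in_setC1 others !inE eqxx.
have neq_sp : s != p by rewrite -in_setC1 others !inE eqxx orbT.
have setT_eq : [set: T] = p |: [set q; s].
  apply/setP => w; rewrite -others !inE; case: eqVneq => //.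
case/orP: (tourD _ _ neq_qs) => [Dqs|Dsq].
  by exists p, q, s; split; rewrite ?setT_eq ?setUA ?Dp.
by exists p, s, q; split; rewrite ?setT_eq ?[[set q; s]]setUC ?setUA ?Dp.
Qed.

Lemma bipartite_num_components (T : finType) (D : rel T) :
  balanced_bipartite_X_to_Y D -> num_components D = f #|T|.
Proof.
case=> X [bal1 bal2 DE].
have no_adj (a b : Defs.arc D) : ~~ line_adj D a b.
  case: a b => [[a1 a2] Da] [[b1 b2] Db]; rewrite /line_adj negb_and /=; apply/orP; right.
  move: Da Db; rewrite !DE !inE => /andP [a1X a2X] /andP [b1X b2X].
  by apply/norP; split; [apply: contraNneq a2X => -> | apply: contraNneq b2X => ->].
rewrite num_components_no_line_adj // card_sig -(mul_eq_f (cardsC X) bal1 bal2) -cardsX.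
by apply: eq_card => -[x y]; rewrite !inE DE inE.
Qed.

Lemma small_digraph_bipartite (T : finType) (D : rel T) :
  strict_digraph D -> #|T| <= 1 -> balanced_bipartite_X_to_Y D.
Proof.
move=> strictD small; exists set0; rewrite setC0 cards0 cardsT; split=> // x y.
rewrite inE; apply: negbTE; apply: contraTN small => Dxy; rewrite -ltnNge.
by have := max_card [set x; y]; rewrite cards2 (arc_neq strictD Dxy).
Qed.

Lemma pair_singleton_split (T : finType) (A : {set T}) u v :
  u != v -> u \in A -> v \in A -> #|A| <= #|~: A| + 1 -> #|~: A| <= 1 ->
  A = [set u; v] /\ exists a, ~: A = [set a].
Proof.
move=> neq_uv uA vA balA small_CA.
have sub_uv : [set u; v] \subset A by apply/subsetP => w /set2P [] ->.
have := subset_leq_card sub_uv; rewrite cards2 neq_uv => card_A.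
have [a aCA] : exists a, a \in ~: A by apply/card_gt0P; lia.
split; last exists a; apply/eqP; rewrite eq_sym eqEcard.
  by rewrite sub_uv cards2 neq_uv; lia.
by rewrite sub1set aCA cards1.
Qed.

Section Extremal.

Variables (T : finType) (D : rel T).
Hypotheses (strictD : strict_digraph D) (asymD : asymmetric D).
Hypotheses (extremal : num_components D = f #|T|) (card_gt1 : 1 < #|T|).
Local Notation X := (root_tails D).

Lemma extremal_structure :
  [/\ #|X| <= #|~: X| + 1, #|~: X| <= #|X| + 1 &
      forall x y, x \in X -> y \notin X -> exists2 r, r \in comp_roots D & val r = (x, y)].
Proof.
have le_f_mul := num_components_le_tails_heads D; rewrite extremal in le_f_mul.
have [sum_eq bal1 bal2] := f_le_mul card_gt1 (card_root_tails_heads_le strictD) le_f_mul.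
have heads_eq : root_heads D = ~: X.
  have cover : X :|: root_heads D = [set: T].
    by apply/eqP; rewrite eqEcard subsetT cardsT (card_root_tails_heads strictD) sum_eq leqnn.
  rewrite -setTD -cover setDUl setDv set0U; apply/esym/setDidPl.
  by rewrite disjoint_sym disjoint_root_tails_heads.
rewrite -heads_eq; split=> // x y xX yY.
have : (x, y) \in setX X (root_heads D) by rewrite in_setX xX heads_eq inE yY.
suff -> : setX X (root_heads D) = val @: comp_roots D by case/imsetP=> r ? ->; exists r.
apply/esym/eqP; rewrite eqEcard comp_roots_sub_tails_heads cardsX.
by rewrite card_comp_roots_val -num_components_roots extremal mul_le_f ?sum_eq.
Qed.

Lemma extremal_cross_arc x y : x \in X -> y \notin X -> D x y.
Proof.
case: extremal_structure => _ _ cross /cross /[apply] -[r _ val_r].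
by have := valP r; rewrite val_r.
Qed.

Lemma extremal_tails_arc u v :
  D u v -> u \in X -> v \in X -> exists p q s, transitive_triangle D p q s.
Proof.
move=> Duv uX vX; have [bal1 _ cross] := extremal_structure.
have heads_le1 : #|~: X| <= 1.
  apply/card_le1_eqP => y1 y2; rewrite !inE => y1X y2X.
  have [r1 root_r1 val_r1] := cross _ _ vX y1X; have [r2 root_r2 val_r2] := cross _ _ vX y2X.
  have := comp_roots_from_head strictD Duv root_r1 root_r2.
  rewrite val_r1 val_r2 => /(_ erefl erefl) /(congr1 (fun r => (val r).2)).
  by rewrite /= val_r1 val_r2.
have [X_eq [y CX_eq]] := pair_singleton_split (arc_neq strictD Duv) uX vX bal1 heads_le1.
have yX : y \notin X by rewrite -in_setC CX_eq set11.
exists u, v, y; split=> //; try exact: extremal_cross_arc.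
by rewrite -(setUCr X) CX_eq X_eq.
Qed.

Lemma extremal_heads_arc u v :
  D u v -> u \notin X -> v \notin X -> exists p q s, transitive_triangle D p q s.
Proof.
move=> Duv uX vX; have [_ bal2 cross] := extremal_structure.
have tails_le1 : #|X| <= 1.
  apply/card_le1_eqP => x1 x2 x1X x2X.
  have [r1 root_r1 val_r1] := cross _ _ x1X uX; have [r2 root_r2 val_r2] := cross _ _ x2X uX.
  have := comp_roots_to_tail strictD Duv root_r1 root_r2.
  rewrite val_r1 val_r2 => /(_ erefl erefl) /(congr1 (fun r => (val r).1)).
  by rewrite /= val_r1 val_r2.
have [CX_eq [x X_eq]] : ~: X = [set u; v] /\ exists x, ~: ~: X = [set x].
  by apply: pair_singleton_split; rewrite ?setCK ?inE ?(arc_neq strictD Duv).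
rewrite setCK in X_eq; have xX : x \in X by rewrite X_eq set11.
exists x, u, v; split=> //; try exact: extremal_cross_arc.
by rewrite -(setUCr X) CX_eq X_eq setUA.
Qed.

Lemma extremal_cases :
  transitive_tournament_of_order3 D \/ balanced_bipartite_X_to_Y D.
Proof.
case: (arc_inside_dec D X) => [[u [v [Duv uX vX]]]|no_tails_arc].
  have [p [q [s triangle]]] := extremal_tails_arc Duv uX vX.
  by left; apply: triangle_tournament triangle.
case: (arc_inside_dec D (~: X)) => [[u [v [Duv]]]|no_heads_arc].
  rewrite !inE => uX vX; have [p [q [s triangle]]] := extremal_heads_arc Duv uX vX.
  by left; apply: triangle_tournament triangle.
right; exists X; have [bal1 bal2 _] := extremal_structure; split=> // x y.
rewrite inE; case: (boolP (x \in X)) => xX; case: (boolP (y \in X)) => yX /=.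
- exact: no_tails_arc.
- exact: extremal_cross_arc.
- by apply/negbTE/negP => /asymD; rewrite extremal_cross_arc.
- by apply: no_heads_arc; rewrite inE.
Qed.

End Extremal.

Theorem theorem2p4 (T : finType) (D : rel T) :
  strict_digraph D -> asymmetric D ->
  num_components D <= f #|T| /\
  (num_components D = f #|T| <->
     transitive_tournament_of_order3 D \/ balanced_bipartite_X_to_Y D).
Proof.
move=> strictD asymD; split; first exact: num_components_le_f.
split=> [extremal|[tournament3|bipartite]]; last exact: bipartite_num_components.
  have [small|card_gt1] := leqP #|T| 1; last exact: extremal_cases.
  by right; apply: small_digraph_bipartite.
have [p [q [s triangle]]] := transitive_tournament_triangle tournament3.
have [card3 _ _ _] := tournament3.
apply/eqP; rewrite eqn_leq num_components_le_f //= card3.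
exact: triangle_num_components_ge2 strictD asymD triangle.
Qed.
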